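(* Consider on the $\mathbb{Z}^2$ graph the system ($m\mathcal{H}1$) $$u_2=v+t\frac{p-q}{s-t},\qquad v_1=u+s\frac{p-q}{s-t},\qquad s_2=\frac{1}{t}+\frac{p-q}{t(u-v)},\qquad t_1=\frac{1}{s}+\frac{p-q}{s(u-v)}.$$ This bond system corresponds to the vertex system ($d$-$H2$) $$2(z_{12}-z)(x_2-x_1)+(p-q)(x_1+x_2)=0,\qquad 2(x_{12}-x)(z_2-z_1)+(p-q)(x_{12}+x)=0,$$ in the sense that, writing $s=x_1/x$, $t=x_2/x$, $u=z_1+z-\frac{p}{2}$, $v=z_2+z-\frac{q}{2}$ with potential functions $x,z$ on the vertices, the system $m\mathcal{H}1$ becomes exactly $d$-$H2$; moreover the vertex system $d$-$H2$ is 3D-compatible.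
   Context: $u,s$ are functions on horizontal edges $\{(m,n),(m+1,n)\}$ and $v,t$ on vertical edges $\{(m,n),(m,n+1)\}$ of the $\mathbb{Z}^2$ graph; for a square with lower-left vertex $(m,n)$, $u,s$ sit on the bottom edge, $v,t$ on the left edge, $u_2,s_2$ on the top edge, $v_1,t_1$ on the right edge; $p$ depends only on $m$, $q$ only on $n$. For vertex functions, $x=x_{m,n}$, $x_1=x_{m+1,n}$, $x_2=x_{m,n+1}$, $x_{12}=x_{m+1,n+1}$, and similarly for $z$. A two-component vertex system on $\mathbb{Z}^2$ is 3D-compatible if, when it is imposed on every face of a cube in $\mathbb{Z}^3$ (with lattice parameters $p_1,p_2,p_3$ attached to the three directions), the values $(x_{123},z_{123})$ at the vertex opposite to the origin computed in the three possible ways coincide. *)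

From HB Require Import structures.
From mathcomp Require Import all_boot all_order all_algebra.
Set Implicit Arguments. Unset Strict Implicit. Unset Printing Implicit Defensive.
Import Order.TTheory GRing.Theory Num.Theory.
Local Open Scope ring_scope.

Section Defs.
Variable F : numFieldType.

(* Bond system mH1 on one square: u,s bottom edge, v,t left edge,
   u2,s2 top edge, v1,t1 right edge; p = p(m), q = q(n). *)
Definition mH1 (p q u v s t u2 v1 s2 t1 : F) : Prop :=
  [/\ u2 = v + t * (p - q) / (s - t),
      v1 = u + s * (p - q) / (s - t),
      s2 = 1 / t + (p - q) / (t * (u - v))
    & t1 = 1 / s + (p - q) / (s * (u - v))].

Definition dH2 (p q x x1 x2 x12 z z1 z2 z12 : F) : Prop :=
  2 * (z12 - z) * (x2 - x1) + (p - q) * (x1 + x2) = 0 /\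
  2 * (x12 - x) * (z2 - z1) + (p - q) * (x12 + x) = 0.

Definition s_of (x : int -> int -> F) (m n : int) : F := x (m + 1) n / x m n.
Definition t_of (x : int -> int -> F) (m n : int) : F := x m (n + 1) / x m n.
Definition u_of (p : int -> F) (z : int -> int -> F) (m n : int) : F :=
  z (m + 1) n + z m n - p m / 2.
Definition v_of (q : int -> F) (z : int -> int -> F) (m n : int) : F :=
  z m (n + 1) + z m n - q n / 2.

(* Genericity of a square for d-H2, as a condition on the data from which
   (x12, z12) is computed: the coefficient of z12 in the first equation and
   the coefficient of x12 in the second equation are nonzero. *)
Definition dH2_generic (p q x x1 x2 z z1 z2 : F) : Prop :=
  x1 != x2 /\ 2 * (z2 - z1) + (p - q) != 0.

(* Directions 1,2,3 carry the
   lattice parameters p1,p2,p3; on a face spanned by directions i < j the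
   system is imposed as Q p_i p_j (...). *)
Definition threeD_compatible
    (Q : F -> F -> F -> F -> F -> F -> F -> F -> F -> F -> Prop)
    (G : F -> F -> F -> F -> F -> F -> F -> F -> Prop) : Prop :=
  forall (p1 p2 p3 x x1 x2 x3 z z1 z2 z3 x12 x13 x23 z12 z13 z23 : F),
    G p1 p2 x x1 x2 z z1 z2 -> G p1 p3 x x1 x3 z z1 z3 ->
    G p2 p3 x x2 x3 z z2 z3 ->
    G p2 p3 x1 x12 x13 z1 z12 z13 -> G p1 p3 x2 x12 x23 z2 z12 z23 ->
    G p1 p2 x3 x13 x23 z3 z13 z23 ->
    Q p1 p2 x x1 x2 x12 z z1 z2 z12 ->
    Q p1 p3 x x1 x3 x13 z z1 z3 z13 ->
    Q p2 p3 x x2 x3 x23 z z2 z3 z23 ->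
    exists x123 z123 : F,
      [/\ Q p2 p3 x1 x12 x13 x123 z1 z12 z13 z123,
          Q p1 p3 x2 x12 x23 x123 z2 z12 z23 z123,
          Q p1 p2 x3 x13 x23 x123 z3 z13 z23 z123 &
          forall X Z : F,
            [/\ Q p2 p3 x1 x12 x13 X z1 z12 z13 Z -> X = x123 /\ Z = z123,
                Q p1 p3 x2 x12 x23 X z2 z12 z23 Z -> X = x123 /\ Z = z123 &
                Q p1 p2 x3 x13 x23 X z3 z13 z23 Z -> X = x123 /\ Z = z123]].

End Defs.

(* Under the potentials, [s - t = (x1 - x2) / x] and
   [u - v = (z1 - z2) - (p - q) / 2], and each equation of mH1 becomes a
   nonzero multiple of an equation of d-H2: the [u2], [v1] equations of the
   first one, the [s2], [t1] equations of the second one.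
   Each equation of d-H2 is affine in the unknown corner value (the first in
   [z12], with coefficient [2 (x2 - x1)], the second in [x12], with
   coefficient [2 (z2 - z1) + (p - q)]), so on generic data the evolution
   around a cube is an explicit rational map, and 3D compatibility reduces to
   rational identities between the three expressions obtained for
   [(x123, z123)]. *)

From mathcomp Require Import all_boot all_order all_algebra ring.
Import Order.TTheory GRing.Theory Num.Theory.
Local Open Scope ring_scope.

Section Algebra.
Context {F : numFieldType}.

Lemma eq_iff_scaled_sub_eq0 (c a b E : F) :
  c != 0 -> E = c * (a - b) -> (a = b <-> E = 0).
Proof.
move=> c_neq0 ->; split=> [->|/eqP]; first by rewrite subrr mulr0.
by rewrite mulf_eq0 (negbTE c_neq0) subr_eq0 => /eqP.
Qed.

Lemma add_div_eq (a b N M D D' : F) :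
  D != 0 -> D' != 0 -> (a - b) * D * D' + N * D' - M * D = 0 ->
  a + N / D = b + M / D'.
Proof.
move=> D_neq0 D'_neq0 cross.
have -> : a + N / D = b + M / D' + ((a - b) * D * D' + N * D' - M * D) / (D * D').
  by field; rewrite D_neq0 D'_neq0.
by rewrite cross mul0r addr0.
Qed.

End Algebra.

Lemma mH1_iff_dH2 (F : numFieldType) (p q x x1 x2 x12 z z1 z2 z12 : F) :
  x != 0 -> x1 != 0 -> x2 != 0 -> x1 / x - x2 / x != 0 ->
  (z1 + z - p / 2) - (z2 + z - q / 2) != 0 ->
  mH1 p q (z1 + z - p / 2) (z2 + z - q / 2) (x1 / x) (x2 / x)
      (z12 + z2 - p / 2) (z12 + z1 - q / 2) (x12 / x2) (x12 / x1) <->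
  dH2 p q x x1 x2 x12 z z1 z2 z12.
Proof.
set s := x1 / x; set t := x2 / x; set u := z1 + z - p / 2; set v := z2 + z - q / 2.
move=> x_neq0 x1_neq0 x2_neq0 st_neq0 uv_neq0.
have two_neq0 : 2 != 0 :> F by rewrite pnatr_eq0.
have x1_x2_neq0 : x1 - x2 != 0.
  by apply: contraNneq st_neq0 => x1_x2_eq0; rewrite /s /t -mulrBl x1_x2_eq0 mul0r.
have x2_x1_neq0 : x2 - x1 != 0 by rewrite -opprB oppr_eq0.
have z21 : z2 - z1 = - (u - v) - (p - q) / 2 by rewrite /u /v; field.
have e1 : z12 + z2 - p / 2 = v + t * (p - q) / (s - t) <->
          2 * (z12 - z) * (x2 - x1) + (p - q) * (x1 + x2) = 0.
  apply: (eq_iff_scaled_sub_eq0 (2 * (x2 - x1))); first exact: mulf_neq0.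
  by rewrite /s /t /v; field; rewrite x_neq0 x1_x2_neq0.
have e2 : z12 + z1 - q / 2 = u + s * (p - q) / (s - t) <->
          2 * (z12 - z) * (x2 - x1) + (p - q) * (x1 + x2) = 0.
  apply: (eq_iff_scaled_sub_eq0 (2 * (x2 - x1))); first exact: mulf_neq0.
  by rewrite /s /t /u; field; rewrite x_neq0 x1_x2_neq0.
have e3 : x12 / x2 = 1 / t + (p - q) / (t * (u - v)) <->
          2 * (x12 - x) * (z2 - z1) + (p - q) * (x12 + x) = 0.
  apply: (eq_iff_scaled_sub_eq0 (- 2 * x2 * (u - v))).
    by rewrite !mulf_neq0 ?oppr_eq0.
  by rewrite z21 /t; field; rewrite x_neq0 uv_neq0 x2_neq0.
have e4 : x12 / x1 = 1 / s + (p - q) / (s * (u - v)) <->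
          2 * (x12 - x) * (z2 - z1) + (p - q) * (x12 + x) = 0.
  apply: (eq_iff_scaled_sub_eq0 (- 2 * x1 * (u - v))).
    by rewrite !mulf_neq0 ?oppr_eq0.
  by rewrite z21 /s; field; rewrite x_neq0 uv_neq0 x1_neq0.
split=> [[/e1 eq1 _ /e3 eq2 _] // | [eq1 eq2]].
by split; [apply/e1 | apply/e2 | apply/e3 | apply/e4].
Qed.

Section Evolution.
Context {F : numFieldType}.

Definition dH2_z12 (p q z x1 x2 : F) := z + (p - q) * (x1 + x2) / (2 * (x1 - x2)).
Definition dH2_x12 (p q x z1 z2 : F) :=
  x * (2 * (z2 - z1) - (p - q)) / (2 * (z2 - z1) + (p - q)).

Lemma dH2_iff {p q x x1 x2 x12 z z1 z2 z12 : F} :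
  dH2_generic p q x x1 x2 z z1 z2 ->
  dH2 p q x x1 x2 x12 z z1 z2 z12 <->
  x12 = dH2_x12 p q x z1 z2 /\ z12 = dH2_z12 p q z x1 x2.
Proof.
case; rewrite -subr_eq0 => x1_x2_neq0 den_neq0.
have two_neq0 : 2 != 0 :> F by rewrite pnatr_eq0.
have x2_x1_neq0 : x2 - x1 != 0 by rewrite -opprB oppr_eq0.
have ez : z12 = dH2_z12 p q z x1 x2 <->
          2 * (z12 - z) * (x2 - x1) + (p - q) * (x1 + x2) = 0.
  apply: (eq_iff_scaled_sub_eq0 (2 * (x2 - x1))); first exact: mulf_neq0.
  by rewrite /dH2_z12; field; rewrite x1_x2_neq0.
have ex : x12 = dH2_x12 p q x z1 z2 <->
          2 * (x12 - x) * (z2 - z1) + (p - q) * (x12 + x) = 0.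
  apply: (eq_iff_scaled_sub_eq0 (2 * (z2 - z1) + (p - q))) => //.
  by rewrite /dH2_x12; field; rewrite den_neq0.
by rewrite /dH2; split=> [[/ez ? /ex ?] | [/ex ? /ez ?]].
Qed.

End Evolution.

Section Cube.
Context {F : numFieldType} {p1 p2 p3 x x1 x2 x3 z z1 z2 z3 : F}.
Hypotheses (g12 : dH2_generic p1 p2 x x1 x2 z z1 z2)
  (g13 : dH2_generic p1 p3 x x1 x3 z z1 z3)
  (g23 : dH2_generic p2 p3 x x2 x3 z z2 z3).

Let x12 := dH2_x12 p1 p2 x z1 z2.
Let x13 := dH2_x12 p1 p3 x z1 z3.
Let x23 := dH2_x12 p2 p3 x z2 z3.
Let z12 := dH2_z12 p1 p2 z x1 x2.
Let z13 := dH2_z12 p1 p3 z x1 x3.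
Let z23 := dH2_z12 p2 p3 z x2 x3.

Lemma cube_face2_consistent :
  dH2_generic p2 p3 x1 x12 x13 z1 z12 z13 ->
  dH2_generic p1 p3 x2 x12 x23 z2 z12 z23 ->
  dH2_x12 p1 p3 x2 z12 z23 = dH2_x12 p2 p3 x1 z12 z13 /\
  dH2_z12 p1 p3 z2 x12 x23 = dH2_z12 p2 p3 z1 x12 x13.
Proof.
move: g12 g13 g23 => [x1_x2 d12] [x1_x3 d13] [x2_x3 d23] [x12_x13 da] [x12_x23 db].
have two_neq0 : 2 != 0 :> F by rewrite pnatr_eq0.
split.
  apply/eqP; rewrite eqr_div //; apply/eqP.
  by rewrite /z12 /z13 /z23 /dH2_z12; field; rewrite !subr_eq0 x1_x2 x1_x3 x2_x3.
apply: add_div_eq; rewrite ?mulf_neq0 ?subr_eq0 //.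
by rewrite /x12 /x13 /x23 /dH2_x12; field; rewrite d12 d13 d23.
Qed.

Lemma cube_face3_consistent :
  dH2_generic p2 p3 x1 x12 x13 z1 z12 z13 ->
  dH2_generic p1 p2 x3 x13 x23 z3 z13 z23 ->
  dH2_x12 p1 p2 x3 z13 z23 = dH2_x12 p2 p3 x1 z12 z13 /\
  dH2_z12 p1 p2 z3 x13 x23 = dH2_z12 p2 p3 z1 x12 x13.
Proof.
move: g12 g13 g23 => [x1_x2 d12] [x1_x3 d13] [x2_x3 d23] [x12_x13 da] [x13_x23 dc].
have two_neq0 : 2 != 0 :> F by rewrite pnatr_eq0.
split.
  apply/eqP; rewrite eqr_div //; apply/eqP.
  by rewrite /z12 /z13 /z23 /dH2_z12; field; rewrite !subr_eq0 x1_x2 x1_x3 x2_x3.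
apply: add_div_eq; rewrite ?mulf_neq0 ?subr_eq0 //.
by rewrite /x12 /x13 /x23 /dH2_x12; field; rewrite d12 d13 d23.
Qed.

End Cube.

Lemma common_unique_solution (T : Type) (P1 P2 P3 : T -> T -> Prop) (a b : T) :
  (forall X Z, P1 X Z <-> X = a /\ Z = b) ->
  (forall X Z, P2 X Z <-> X = a /\ Z = b) ->
  (forall X Z, P3 X Z <-> X = a /\ Z = b) ->
  exists X Z, [/\ P1 X Z, P2 X Z, P3 X Z &
    forall X' Z', [/\ P1 X' Z' -> X' = X /\ Z' = Z,
                      P2 X' Z' -> X' = X /\ Z' = Z &
                      P3 X' Z' -> X' = X /\ Z' = Z]].
Proof.
move=> P1E P2E P3E; exists a, b.
by split; [apply/P1E | apply/P2E | apply/P3E | move=> X Z; split=> [/P1E|/P2E|/P3E]].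
Qed.

Lemma dH2_threeD_compatible (F : numFieldType) :
  threeD_compatible (@dH2 F) (@dH2_generic F).
Proof.
move=> p1 p2 p3 x x1 x2 x3 z z1 z2 z3 x12 x13 x23 z12 z13 z23 g12 g13 g23 ga gb gc.
move=> /(dH2_iff g12)[? ?] /(dH2_iff g13)[? ?] /(dH2_iff g23)[? ?]; subst.
have [xb zb] := cube_face2_consistent g12 g13 g23 ga gb.
have [xc zc] := cube_face3_consistent g12 g13 g23 ga gc.
apply: common_unique_solution (fun _ _ => dH2_iff ga) _ _ => X Z.
  by rewrite -xb -zb; exact: dH2_iff gb.
by rewrite -xc -zc; exact: dH2_iff gc.
Qed.

Theorem proposition3p3 (F : numFieldType) :
  (* (i) under the potential substitution, mH1 on the square with lower-left
     vertex (m,n) is exactly d-H2 on that square *)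
  (forall (p q : int -> F) (x z : int -> int -> F) (m n : int),
     x m n != 0 -> x (m + 1) n != 0 -> x m (n + 1) != 0 ->
     s_of x m n - t_of x m n != 0 ->
     u_of p z m n - v_of q z m n != 0 ->
     (mH1 (p m) (q n) (u_of p z m n) (v_of q z m n) (s_of x m n) (t_of x m n)
          (u_of p z m (n + 1)) (v_of q z (m + 1) n)
          (s_of x m (n + 1)) (t_of x (m + 1) n)
      <->
      dH2 (p m) (q n) (x m n) (x (m + 1) n) (x m (n + 1)) (x (m + 1) (n + 1))
          (z m n) (z (m + 1) n) (z m (n + 1)) (z (m + 1) (n + 1)))) /\
  (* (ii) d-H2 is 3D-compatible *)
  threeD_compatible (@dH2 F) (@dH2_generic F).
Proof.
split; last exact: dH2_threeD_compatible.
by move=> p q x z m n; apply: mH1_iff_dH2.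
Qed.
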